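(* Let $g\ge2$, $q=2g+1$, $\zeta=\exp(2\pi\sqrt{-1}/q)$. For $i=1,\dots,g$ let $\omega_i=\eta_i/B(i/q,i/q)$ where $\eta_i=dx/y^{q-i}$ on $C_{q,1}$, and let $\Omega_A=(\int_{A_j}\omega_i)_{i,j}$, $\Omega_B=(\int_{B_j}\omega_i)_{i,j}$ ($1\le i,j\le g$). Then $$\Omega_A=-\operatorname{diag}(-1+\zeta^i)\,\operatorname{diag}(\zeta^i)\,\big(\zeta^{2i(j-1)}\big)_{i,j},\qquad \Omega_B=\operatorname{diag}(-1+\zeta^i)\Big(\sum_{k=0}^{j-1}\zeta^{2ik}\Big)_{i,j}.$$
   Context: $C_{q,1}$ is the compact Riemann surface of $y^q=x(1-x)$ (genus $g$); $\{\eta_i\}$ is a basis of holomorphic 1-forms; $B(u,v)=\int_0^1t^{u-1}(1-t)^{v-1}dt$. $\sigma(x,y)=(x,\zeta y)$, $I_0(t)=(t,\sqrt[q]{t(1-t)})$, $c_j$ the class of $I_0\cdot(\sigma^j\circ I_0)^{-1}$. In coordinates $z=4^{1/q}y$, $w=-\sqrt{-1}(2x-1)$ (so $w^2=z^q-1$), $\gamma_k(t)=(\zeta^k 2t,\sqrt{-1}\sqrt{1-(2t)^q})$ for $0\le t\le 1/2$ and $(\zeta^k(2-2t),-\sqrt{-1}\sqrt{1-(2-2t)^q})$ for $1/2\le t\le1$; $A_i=\gamma_{2i-1}\cdot\gamma_{2i}^{-1}$, $B_i=\gamma_{2i-1}\cdot\gamma_{2i-2}^{-1}\cdots\gamma_1\cdot\gamma_0^{-1}$,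 forming a symplectic basis of $H_1(C_{q,1};\mathbb Z)$. $\operatorname{diag}(d_i)$ is the diagonal matrix with $(i,i)$-entry $d_i$. *)

From Stdlib Require Import Reals.
Open Scope R_scope.

Record Cx : Type := mkC { Cre : R ; Cim : R }.

Definition RC (r : R) : Cx := mkC r 0.
Definition Ci : Cx := mkC 0 1.
Definition C0 : Cx := RC 0.
Definition C1 : Cx := RC 1.
Definition Cadd (z w : Cx) : Cx := mkC (Cre z + Cre w) (Cim z + Cim w).
Definition Copp (z : Cx) : Cx := mkC (- Cre z) (- Cim z).
Definition Csub (z w : Cx) : Cx := Cadd z (Copp w).
Definition Cmul (z w : Cx) : Cx :=
  mkC (Cre z * Cre w - Cim z * Cim w) (Cre z * Cim w + Cim z * Cre w).
Definition Cinv (z : Cx) : Cx :=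
  let n := Cre z * Cre z + Cim z * Cim z in mkC (Cre z / n) (- Cim z / n).
Definition Cdiv (z w : Cx) : Cx := Cmul z (Cinv w).
Fixpoint Cpow (z : Cx) (n : nat) : Cx :=
  match n with O => C1 | S m => Cmul z (Cpow z m) end.
Fixpoint Csum (n : nat) (f : nat -> Cx) : Cx :=
  match n with O => C0 | S m => Cadd (Csum m f) (f m) end.

Definition zeta (q : nat) : Cx :=
  mkC (cos (2 * PI / INR q)) (sin (2 * PI / INR q)).

Definition ImpInt (h : R -> R) (a b l : R) : Prop :=
  forall eps, 0 < eps -> exists del, 0 < del /\
    forall a' b', a < a' < a + del -> b - del < b' < b ->
      exists pr : Riemann_integrable h a' b', Rabs (RiemannInt pr - l) < eps.

Definition ImpIntC (h : R -> Cx) (a b : R) (L : Cx) : Prop :=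
  ImpInt (fun t => Cre (h t)) a b (Cre L) /\ ImpInt (fun t => Cim (h t)) a b (Cim L).

Definition BetaInt (u v beta : R) : Prop :=
  ImpInt (fun t => Rpower t (u - 1) * Rpower (1 - t) (v - 1)) 0 1 beta.

(** * Line integral of a 1-form  f(x,y) dx  along a smooth piece p|(a,b)
    of a path p : R -> Cx*Cx (in coordinates (x,y)):  int_a^b f(p t) x'(t) dt *)
Definition PieceInt (f : Cx -> Cx -> Cx) (p : R -> Cx * Cx) (a b : R) (L : Cx) : Prop :=
  exists dx : R -> Cx,
    (forall t, a < t < b ->
       derivable_pt_lim (fun s => Cre (fst (p s))) t (Cre (dx t)) /\
       derivable_pt_lim (fun s => Cim (fst (p s))) t (Cim (dx t))) /\
    ImpIntC (fun t => Cmul (f (fst (p t)) (snd (p t))) (dx t)) a b L.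

(** * The paths gamma_k, given in the coordinates (z,w) with
    z = 4^(1/q) y,  w = -sqrt(-1) (2x - 1) *)
Definition gamma_zw (q k : nat) (t : R) : Cx * Cx :=
  if Rle_dec t (1/2) then
    (Cmul (Cpow (zeta q) k) (RC (2 * t)),
     Cmul Ci (RC (sqrt (1 - (2 * t) ^ q))))
  else
    (Cmul (Cpow (zeta q) k) (RC (2 - 2 * t)),
     Copp (Cmul Ci (RC (sqrt (1 - (2 - 2 * t) ^ q))))).

Definition zw_to_xy (q : nat) (zw : Cx * Cx) : Cx * Cx :=
  (Cmul (RC (1/2)) (Cadd C1 (Cmul Ci (snd zw))),
   Cmul (RC (/ Rpower 4 (/ INR q))) (fst zw)).

Definition gamma_xy (q k : nat) (t : R) : Cx * Cx := zw_to_xy q (gamma_zw q k t).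

Definition GammaInt (q : nat) (f : Cx -> Cx -> Cx) (k : nat) (L : Cx) : Prop :=
  exists L1 L2, PieceInt f (gamma_xy q k) 0 (1/2) L1 /\
                PieceInt f (gamma_xy q k) (1/2) 1 L2 /\ L = Cadd L1 L2.

Definition omega_coef (q i : nat) (beta : R) : Cx -> Cx -> Cx :=
  fun x y => Cmul (RC (/ beta)) (Cinv (Cpow y (q - i))).

(** periods over A_j = gamma_{2j-1} . gamma_{2j}^{-1} and
    B_j = gamma_{2j-1} . gamma_{2j-2}^{-1} ... gamma_1 . gamma_0^{-1},
    in terms of the integrals I m over gamma_m *)
Definition periodA (I : nat -> Cx) (j : nat) : Cx := Csub (I (2 * j - 1)%nat) (I (2 * j)%nat).
Definition periodB (I : nat -> Cx) (j : nat) : Cx :=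
  Csum (2 * j) (fun m => if Nat.odd m then I m else Copp (I m)).

Definition OmegaA_val (q i j : nat) : Cx :=
  Copp (Cmul (Cadd (Copp C1) (Cpow (zeta q) i))
             (Cmul (Cpow (zeta q) i) (Cpow (zeta q) (2 * i * (j - 1))))).
Definition OmegaB_val (q i j : nat) : Cx :=
  Cmul (Cadd (Copp C1) (Cpow (zeta q) i)) (Csum j (fun k => Cpow (zeta q) (2 * i * k))).

From Stdlib Require Import Reals Lra Lia Psatz Classical_Prop.
From Coquelicot Require Import Coquelicot.
(* imported last, so that [Reals]' own [C1] does not shadow the one of [Defs] *)
From Pilot Require Import Defs.
Open Scope R_scope.

(** Each path [gamma_k] runs along the real segment [x : 0 -> 1/2 -> 1] with
    [y = r zeta^k], where [r > 0] is the real q-th root of [x (1 - x)].  Hence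
    the form [dx / y^(q - i)] pulls back to [zeta^(k i)] times the real Beta
    density [(x (1 - x))^(i/q - 1) dx], and the integral of
    [omega_i = dx / (beta y^(q - i))] over [gamma_k] equals
    [zeta^(k i) B(i/q, i/q) / beta = zeta^(k i)], the normalisation [beta] being
    forced to be [B(i/q, i/q)] by uniqueness of improper integrals.  The periods
    over [A_j] and [B_j] are then alternating sums of powers of [zeta^i]. *)

Lemma Cx_eq (a b : Cx) : Cre a = Cre b -> Cim a = Cim b -> a = b.
Proof. destruct a, b; simpl; intros; subst; reflexivity. Qed.

Lemma Cx_ring : ring_theory C0 C1 Cadd Cmul Csub Copp (@eq Cx).
Proof.
  constructor; intros; apply Cx_eq; destruct x; try destruct y; try destruct z;
    unfold Cadd, Cmul, Csub, Copp, C0, C1, RC; simpl; ring.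
Qed.
Add Ring CxRing : Cx_ring.

Lemma RC_mul a b : RC (a * b) = Cmul (RC a) (RC b).
Proof. apply Cx_eq; simpl; ring. Qed.

Lemma Cpow_add z m n : Cpow z (m + n) = Cmul (Cpow z m) (Cpow z n).
Proof. induction m as [|m IH]; simpl; [ring | rewrite IH; ring]. Qed.

Lemma Cpow_mul z m n : Cpow z (m * n) = Cpow (Cpow z m) n.
Proof.
  induction n as [|n IH]; [now rewrite Nat.mul_0_r|].
  replace (m * S n)%nat with (m + m * n)%nat by lia.
  rewrite Cpow_add, IH; reflexivity.
Qed.

Lemma Cpow_Cmul a b n : Cpow (Cmul a b) n = Cmul (Cpow a n) (Cpow b n).
Proof. induction n as [|n IH]; simpl; [ring | rewrite IH; ring]. Qed.

Lemma Cpow_RC r n : Cpow (RC r) n = RC (r ^ n).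
Proof. induction n as [|n IH]; simpl; [reflexivity | rewrite IH, RC_mul; reflexivity]. Qed.

Lemma Cpow_C1 n : Cpow C1 n = C1.
Proof. induction n as [|n IH]; simpl; [reflexivity | rewrite IH; ring]. Qed.

Lemma Cinv_unique w w' : Cmul w w' = C1 -> Cinv w = w'.
Proof.
  destruct w as [a b], w' as [c d]; unfold Cmul, C1, RC, Cinv; simpl.
  intro H; injection H as Hre Him.
  assert (Hn : a * a + b * b <> 0) by (intro; nra).
  (* solving the linear system  a c - b d = 1,  a d + b c = 0  for (c, d) *)
  assert (Ec : c * (a * a + b * b) = a)
    by (transitivity (a * (a * c - b * d) + b * (a * d + b * c)); [ring | rewrite Hre, Him; ring]).
  assert (Ed : d * (a * a + b * b) = - b)
    by (transitivity (a * (a * d + b * c) - b * (a * c - b * d)); [ring | rewrite Hre, Him; ring]).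
  apply Cx_eq; simpl.
  - apply (Rmult_eq_reg_r (a * a + b * b)); [rewrite Ec; field |]; exact Hn.
  - apply (Rmult_eq_reg_r (a * a + b * b)); [rewrite Ed; field |]; exact Hn.
Qed.

Lemma zeta_pow q n : (0 < q)%nat ->
  Cpow (zeta q) n = mkC (cos (2 * PI * INR n / INR q)) (sin (2 * PI * INR n / INR q)).
Proof.
  intros Hq. assert (INR q <> 0) by (apply not_0_INR; lia).
  induction n as [|n IH]; simpl Cpow.
  - replace (2 * PI * INR 0 / INR q) with 0 by (simpl; field; auto).
    rewrite cos_0, sin_0; reflexivity.
  - rewrite IH, S_INR. unfold zeta, Cmul; simpl.
    replace (2 * PI * (INR n + 1) / INR q) with (2 * PI / INR q + 2 * PI * INR n / INR q)
      by (field; auto).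
    rewrite cos_plus, sin_plus; apply Cx_eq; simpl; ring.
Qed.

Lemma zeta_pow_q q : (0 < q)%nat -> Cpow (zeta q) q = C1.
Proof.
  intros Hq. rewrite zeta_pow by exact Hq.
  assert (INR q <> 0) by (apply not_0_INR; lia).
  replace (2 * PI * INR q / INR q) with (2 * PI) by (field; auto).
  rewrite cos_2PI, sin_2PI; reflexivity.
Qed.

Lemma zeta_pow_cancel q k i : (0 < q)%nat -> (i <= q)%nat ->
  Cmul (Cpow (zeta q) (k * (q - i))) (Cpow (zeta q) (k * i)) = C1.
Proof.
  intros Hq Hi. rewrite <- Cpow_add.
  replace (k * (q - i) + k * i)%nat with (q * k)%nat by nia.
  rewrite Cpow_mul, zeta_pow_q by exact Hq. apply Cpow_C1.
Qed.

(** * Improper integrals over an open interval *)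

Definition ImproperInt (h : R -> R) (a b l : R) : Prop :=
  forall eps, 0 < eps -> exists del, 0 < del /\
    forall a' b', a < a' < a + del -> b - del < b' < b ->
      exists I, is_RInt h a' b' I /\ Rabs (I - l) < eps.

Lemma ImpInt_iff h a b l : ImpInt h a b l <-> ImproperInt h a b l.
Proof.
  split; intros H eps Heps; destruct (H eps Heps) as [del [Hdel K]];
    exists del; split; auto; intros a' b' Ha Hb; specialize (K a' b' Ha Hb).
  - destruct K as [pr Hpr]. exists (RiemannInt pr).
    split; [apply ex_RInt_Reals_aux_1 | exact Hpr].
  - destruct K as [I [HI Hl]].
    exists (ex_RInt_Reals_0 _ _ _ (ex_intro _ I HI)).
    rewrite <- RInt_Reals, (is_RInt_unique _ _ _ _ HI). exact Hl.
Qed.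

Lemma ImproperInt_unique h a b l1 l2 : a < b ->
  ImproperInt h a b l1 -> ImproperInt h a b l2 -> l1 = l2.
Proof.
  intros Hab H1 H2. apply cond_eq. intros eps Heps.
  destruct (H1 (eps / 2)) as [d1 [Hd1 K1]]; [lra|].
  destruct (H2 (eps / 2)) as [d2 [Hd2 K2]]; [lra|].
  (* both approximations are taken on the same subinterval [a + d/2, b - d/2] *)
  set (d := Rmin (Rmin d1 d2) (b - a)).
  assert (d <= d1 /\ d <= d2 /\ d <= b - a /\ 0 < d) as [D1 [D2 [D3 D4]]].
  { unfold d; repeat split; try (repeat apply Rmin_glb_lt; lra).
    - eapply Rle_trans; [apply Rmin_l | apply Rmin_l].
    - eapply Rle_trans; [apply Rmin_l | apply Rmin_r].
    - apply Rmin_r. }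
  destruct (K1 (a + d / 2) (b - d / 2)) as [I1 [HI1 A1]]; try lra.
  destruct (K2 (a + d / 2) (b - d / 2)) as [I2 [HI2 A2]]; try lra.
  assert (I1 = I2) as <-
    by (rewrite <- (is_RInt_unique _ _ _ _ HI1); apply is_RInt_unique; exact HI2).
  replace (l1 - l2) with ((I1 - l2) - (I1 - l1)) by ring.
  eapply Rle_lt_trans; [apply Rabs_triang | rewrite Rabs_Ropp; lra].
Qed.

Lemma ImproperInt_ext f g a b l : a < b -> (forall t, a < t < b -> f t = g t) ->
  ImproperInt f a b l -> ImproperInt g a b l.
Proof.
  intros Hab Hfg H eps Heps. destruct (H eps Heps) as [del [Hdel K]].
  exists (Rmin del ((b - a) / 2)). split; [apply Rmin_glb_lt; lra|].
  intros a' b' Ha Hb.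
  assert (Rmin del ((b - a) / 2) <= del) by apply Rmin_l.
  assert (Rmin del ((b - a) / 2) <= (b - a) / 2) by apply Rmin_r.
  destruct (K a' b') as [I [HI Hl]]; try lra.
  exists I. split; [|exact Hl].
  apply (is_RInt_ext f); [|exact HI].
  intros x Hx. rewrite Rmin_left, Rmax_right in Hx by lra. apply Hfg; lra.
Qed.

Lemma ImproperInt_scal f a b l c :
  ImproperInt f a b l -> ImproperInt (fun t => c * f t) a b (c * l).
Proof.
  intros H eps Heps.
  assert (Hc : 0 < Rabs c + 1) by (pose proof (Rabs_pos c); lra).
  destruct (H (eps / (Rabs c + 1))) as [del [Hdel K]]; [apply Rdiv_lt_0_compat; lra|].
  exists del; split; [exact Hdel|]. intros a' b' Ha Hb.
  destruct (K a' b' Ha Hb) as [I [HI Hl]].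
  exists (c * I). split; [exact (is_RInt_scal f a' b' c I HI)|].
  replace (c * I - c * l) with (c * (I - l)) by ring. rewrite Rabs_mult.
  apply Rle_lt_trans with ((Rabs c + 1) * Rabs (I - l)).
  - pose proof (Rabs_pos (I - l)). nra.
  - apply (Rmult_lt_compat_l (Rabs c + 1)) in Hl; [|exact Hc].
    replace ((Rabs c + 1) * (eps / (Rabs c + 1))) with eps in Hl by (field; lra). exact Hl.
Qed.

Lemma is_RInt_reflect (f : R -> R) (a b I : R) :
  is_RInt f (1 - b) (1 - a) I -> is_RInt (fun t => f (1 - t)) a b I.
Proof.
  intros H. apply is_RInt_swap in H.
  replace (1 - a) with (-1 * a + 1) in H by ring.
  replace (1 - b) with (-1 * b + 1) in H by ring.
  apply is_RInt_comp_lin, is_RInt_opp in H. rewrite opp_opp in H.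
  revert H. apply is_RInt_ext. intros x _.
  change (- (-1 * f (-1 * x + 1)) = f (1 - x)).
  replace (-1 * x + 1) with (1 - x) by ring. ring.
Qed.

Lemma ImproperInt_reflect f a b l :
  ImproperInt f a b l -> ImproperInt (fun t => f (1 - t)) (1 - b) (1 - a) l.
Proof.
  intros H eps Heps. destruct (H eps Heps) as [del [Hdel K]].
  exists del; split; [exact Hdel|]. intros a' b' Ha Hb.
  destruct (K (1 - b') (1 - a')) as [I [HI Hl]]; try lra.
  exists I. split; [apply is_RInt_reflect; exact HI | exact Hl].
Qed.

Lemma exp_le_mono x y : x <= y -> exp x <= exp y.
Proof. intros [H | ->]; [left; apply exp_increasing; exact H | right; reflexivity]. Qed.

Lemma ln_nonpos t : 0 < t <= 1 -> ln t <= 0.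
Proof. intros. rewrite <- ln_1. apply ln_le; lra. Qed.

Lemma Rpower_pos t c : 0 < Rpower t c.
Proof. apply exp_pos. Qed.

Lemma Rpower_ge1 t c : 0 < t <= 1 -> c <= 0 -> 1 <= Rpower t c.
Proof.
  intros Ht Hc. unfold Rpower. rewrite <- exp_0. apply exp_le_mono.
  pose proof (ln_nonpos t Ht). nra.
Qed.

Lemma Rpower_le_inv t s c : 0 < s <= 1 -> s <= t -> -1 <= c <= 0 -> Rpower t c <= / s.
Proof.
  intros Hs Hst Hc. unfold Rpower.
  rewrite <- (exp_ln (/ s)) by (apply Rinv_0_lt_compat; lra).
  apply exp_le_mono. rewrite ln_Rinv by lra.
  pose proof (ln_nonpos s Hs). pose proof (ln_le s t (proj1 Hs) Hst). nra.
Qed.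

Lemma continuous_Rpower c t : 0 < t -> continuous (fun x => Rpower x c) t.
Proof.
  intros Ht. apply (ex_derive_continuous (K := R_AbsRing) (V := R_NormedModule)).
  exists (c * Rpower t (c - 1)). apply is_derive_Reals, derivable_pt_lim_power; exact Ht.
Qed.

(** * The symmetric Beta integral [B(u, u)], [0 < u < 1]

    The integrand is symmetric about [1/2], integrable on compact subintervals of
    [(0, 1)], at least [1] everywhere and bounded near [1/2].  Its integral over
    [(a, 1/2)] is antitone in [a] and bounded by [2/u], so it converges to its
    supremum [half_beta u] as [a -> 0+]; then [B(u, u) = 2 * half_beta u]. *)
Section Beta.
Variable u : R.
Hypothesis Hu : 0 < u < 1.

Definition beta_kernel (t : R) : R := Rpower t (u - 1) * Rpower (1 - t) (u - 1).

Lemma beta_kernel_sym t : beta_kernel (1 - t) = beta_kernel t.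
Proof. unfold beta_kernel. replace (1 - (1 - t)) with t by ring. ring. Qed.

Lemma beta_kernel_continuous t : 0 < t < 1 -> continuous beta_kernel t.
Proof.
  intros Ht. apply (continuous_mult (fun x => Rpower x (u - 1)) (fun x => Rpower (1 - x) (u - 1))).
  - apply continuous_Rpower; lra.
  - apply (continuous_comp (fun x => 1 - x) (fun y => Rpower y (u - 1))).
    + apply (continuous_minus (fun _ => 1) (fun x => x)); [apply continuous_const | apply continuous_id].
    + apply continuous_Rpower; lra.
Qed.

Lemma beta_kernel_ex_RInt x y : 0 < x < 1 -> 0 < y < 1 -> ex_RInt beta_kernel x y.
Proof.
  intros Hx Hy. apply (ex_RInt_continuous (V := R_CompleteNormedModule)).
  intros z Hz. apply beta_kernel_continuous. split.
  - eapply Rlt_le_trans; [|apply Hz]. apply Rmin_glb_lt; lra.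
  - eapply Rle_lt_trans; [apply Hz|]. apply Rmax_lub_lt; lra.
Qed.

Lemma beta_kernel_is_RInt x y : 0 < x < 1 -> 0 < y < 1 ->
  is_RInt beta_kernel x y (RInt beta_kernel x y).
Proof.
  intros Hx Hy. apply (RInt_correct (V := R_CompleteNormedModule)).
  apply beta_kernel_ex_RInt; assumption.
Qed.

Lemma beta_kernel_ge1 t : 0 < t < 1 -> 1 <= beta_kernel t.
Proof.
  intros Ht. unfold beta_kernel.
  assert (1 <= Rpower t (u - 1)) by (apply Rpower_ge1; lra).
  assert (1 <= Rpower (1 - t) (u - 1)) by (apply Rpower_ge1; lra). nra.
Qed.

(** On [(0, 1/2]] the factor [(1 - t) ^ (u - 1)] is at most [2]. *)
Lemma beta_kernel_le t : 0 < t <= 1/2 -> beta_kernel t <= 2 * Rpower t (u - 1).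
Proof.
  intros Ht. unfold beta_kernel.
  assert (Hle : Rpower (1 - t) (u - 1) <= / (1/2)) by (apply Rpower_le_inv; lra).
  replace (/ (1/2)) with 2 in Hle by field.
  pose proof (Rpower_pos t (u - 1)). nra.
Qed.

Lemma beta_kernel_le8 t : 1/4 <= t <= 1/2 -> beta_kernel t <= 8.
Proof.
  intros Ht. eapply Rle_trans; [apply beta_kernel_le; lra|].
  assert (Hle : Rpower t (u - 1) <= / (1/4)) by (apply Rpower_le_inv; lra).
  replace (/ (1/4)) with 4 in Hle by field. lra.
Qed.

Lemma RInt_beta_kernel_ge a b : 0 < a <= b -> b < 1 -> b - a <= RInt beta_kernel a b.
Proof.
  intros Hab Hb. replace (b - a) with (RInt (fun _ => 1) a b)
    by (rewrite RInt_const; change ((b - a) * 1 = b - a); ring).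
  apply RInt_le; try lra.
  - apply ex_RInt_const.
  - apply beta_kernel_ex_RInt; lra.
  - intros; apply beta_kernel_ge1; lra.
Qed.

Lemma RInt_beta_kernel_le b : 1/4 <= b <= 1/2 -> RInt beta_kernel b (1/2) <= 8 * (1/2 - b).
Proof.
  intros Hb. replace (8 * (1/2 - b)) with (RInt (fun _ => 8) b (1/2))
    by (rewrite RInt_const; change ((1/2 - b) * 8 = 8 * (1/2 - b)); ring).
  apply RInt_le; try lra.
  - apply beta_kernel_ex_RInt; lra.
  - apply ex_RInt_const.
  - intros; apply beta_kernel_le8; lra.
Qed.

Lemma RInt_beta_kernel_Chasles a b c : 0 < a < 1 -> 0 < b < 1 -> 0 < c < 1 ->
  RInt beta_kernel a c = RInt beta_kernel a b + RInt beta_kernel b c.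
Proof.
  intros. symmetry. apply (RInt_Chasles (V := R_CompleteNormedModule));
    apply beta_kernel_ex_RInt; lra.
Qed.

(** [int_a^(1/2) t^(u-1) dt = ((1/2)^u - a^u) / u <= 1/u]. *)
Lemma RInt_Rpower_le a : 0 < a <= 1/2 -> RInt (fun t => Rpower t (u - 1)) a (1/2) <= / u.
Proof.
  intros Ha.
  assert (D : is_RInt (fun t => Rpower t (u - 1)) a (1/2)
                (minus (Rpower (1/2) u / u) (Rpower a u / u))).
  { apply (is_RInt_derive (fun t => Rpower t u / u)); intros x Hx;
      rewrite Rmin_left, Rmax_right in Hx by lra.
    - apply is_derive_Reals.
      replace (Rpower x (u - 1)) with ((u * Rpower x (u - 1)) * / u) by (field; lra).
      apply derivable_pt_lim_div_scal, derivable_pt_lim_power. lra.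
    - apply continuous_Rpower. lra. }
  rewrite (is_RInt_unique _ _ _ _ D). change (Rpower (1/2) u / u - Rpower a u / u <= / u).
  assert (Rpower (1/2) u <= 1).
  { unfold Rpower. apply Rle_trans with (exp 0); [apply exp_le_mono | rewrite exp_0; lra].
    assert (ln (1/2) <= 0) by (apply ln_nonpos; lra). nra. }
  pose proof (Rpower_pos a u). assert (0 < / u) by (apply Rinv_0_lt_compat; lra).
  unfold Rdiv. nra.
Qed.

Definition beta_tail (a : R) : R := RInt beta_kernel a (1/2).

Lemma beta_tail_bound a : 0 < a <= 1/2 -> beta_tail a <= 2 / u.
Proof.
  intros Ha. unfold beta_tail.
  assert (Ex : ex_RInt (fun t => Rpower t (u - 1)) a (1/2)).
  { apply (ex_RInt_continuous (V := R_CompleteNormedModule)). intros z Hz.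
    rewrite Rmin_left in Hz by lra. apply continuous_Rpower. lra. }
  apply Rle_trans with (RInt (fun t => 2 * Rpower t (u - 1)) a (1/2)).
  - apply RInt_le; try lra.
    + apply beta_kernel_ex_RInt; lra.
    + exact (ex_RInt_scal (V := R_NormedModule) _ _ _ 2 Ex).
    + intros t Ht. apply beta_kernel_le; lra.
  - replace (RInt (fun t => 2 * Rpower t (u - 1)) a (1/2))
      with (2 * RInt (fun t => Rpower t (u - 1)) a (1/2))
      by (symmetry; exact (RInt_scal (V := R_CompleteNormedModule) _ _ _ 2 Ex)).
    pose proof (RInt_Rpower_le a Ha). unfold Rdiv. lra.
Qed.

(** The kernel is positive, so longer tails have larger integrals. *)
Lemma beta_tail_antitone a b : 0 < a <= b -> b <= 1/2 -> beta_tail b <= beta_tail a.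
Proof.
  intros. unfold beta_tail. rewrite (RInt_beta_kernel_Chasles a b (1/2)) by lra.
  pose proof (RInt_beta_kernel_ge a b). lra.
Qed.

Definition beta_tail_values (y : R) : Prop := exists a, 0 < a < 1/2 /\ y = beta_tail a.

Lemma beta_tail_values_bound : bound beta_tail_values.
Proof. exists (2 / u). intros y [a [Ha ->]]. apply beta_tail_bound; lra. Qed.

Lemma beta_tail_values_inhabited : exists y, beta_tail_values y.
Proof. exists (beta_tail (1/4)), (1/4). split; [lra | reflexivity]. Qed.

(** [half_beta = int_0^(1/2) beta_kernel], defined as the supremum of the tails. *)
Definition half_beta : R :=
  proj1_sig (completeness beta_tail_values beta_tail_values_bound beta_tail_values_inhabited).

Lemma half_beta_lub : is_lub beta_tail_values half_beta.
Proof. unfold half_beta. destruct completeness as [l Hl]. exact Hl. Qed.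

Lemma half_beta_pos : 0 < half_beta.
Proof.
  destruct half_beta_lub as [Hub _]. apply Rlt_le_trans with (beta_tail (1/4)).
  - unfold beta_tail. pose proof (RInt_beta_kernel_ge (1/4) (1/2)). lra.
  - apply Hub. exists (1/4). split; [lra | reflexivity].
Qed.

(** An antitone bounded function converges to its supremum at [0+]. *)
Lemma beta_tail_lim eps : 0 < eps -> exists del, 0 < del <= 1/4 /\
  forall a, 0 < a < del -> Rabs (beta_tail a - half_beta) < eps.
Proof.
  intros He. destruct half_beta_lub as [Hub Hleast].
  assert (exists a0, 0 < a0 < 1/2 /\ half_beta - eps < beta_tail a0) as [a0 [Ha0 Hlt]].
  { apply NNPP. intro N. assert (half_beta <= half_beta - eps); [|lra].
    apply Hleast. intros y [a [Ha ->]]. apply Rnot_lt_le. intro. apply N. exists a; auto. }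
  exists (Rmin a0 (1/4)). split; [split; [apply Rmin_glb_lt; lra | apply Rmin_r]|].
  intros a Ha.
  assert (Rmin a0 (1/4) <= a0) by apply Rmin_l. assert (Rmin a0 (1/4) <= 1/4) by apply Rmin_r.
  assert (beta_tail a <= half_beta) by (apply Hub; exists a; split; [lra | reflexivity]).
  assert (beta_tail a0 <= beta_tail a) by (apply beta_tail_antitone; lra).
  apply Rabs_def1; lra.
Qed.

Lemma ImproperInt_beta_half : ImproperInt beta_kernel 0 (1/2) half_beta.
Proof.
  intros eps He. destruct (beta_tail_lim (eps / 2)) as [d [Hd K]]; [lra|].
  exists (Rmin d (eps / 32)). split; [apply Rmin_glb_lt; lra|]. intros a' b' Ha Hb.
  assert (Rmin d (eps / 32) <= d) by apply Rmin_l.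
  assert (Rmin d (eps / 32) <= eps / 32) by apply Rmin_r.
  exists (RInt beta_kernel a' b'). split; [apply beta_kernel_is_RInt; lra|].
  (* the integral over (a', b') is the tail at a' minus a short piece near 1/2 *)
  assert (E : RInt beta_kernel a' b' = beta_tail a' - RInt beta_kernel b' (1/2))
    by (unfold beta_tail; rewrite (RInt_beta_kernel_Chasles a' b' (1/2)) by lra; lra).
  rewrite E. pose proof (K a' ltac:(lra)) as Ka.
  pose proof (RInt_beta_kernel_le b' ltac:(lra)).
  pose proof (RInt_beta_kernel_ge b' (1/2) ltac:(lra) ltac:(lra)).
  apply Rabs_def2 in Ka. apply Rabs_def1; lra.
Qed.

(** By symmetry, the integral over [(1/2, b)] is the tail at [1 - b]. *)
Lemma RInt_beta_right_half b : 1/2 <= b < 1 -> RInt beta_kernel (1/2) b = beta_tail (1 - b).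
Proof.
  intros Hb. unfold beta_tail.
  assert (Hrefl : is_RInt (fun t => beta_kernel (1 - t)) (1/2) b (RInt beta_kernel (1 - b) (1/2))).
  { apply is_RInt_reflect. replace (1 - 1/2) with (1/2) by field.
    apply beta_kernel_is_RInt; lra. }
  rewrite <- (is_RInt_unique _ _ _ _ Hrefl). apply RInt_ext. intros; symmetry; apply beta_kernel_sym.
Qed.

Lemma ImproperInt_beta : ImproperInt beta_kernel 0 1 (2 * half_beta).
Proof.
  intros eps He. destruct (beta_tail_lim (eps / 2)) as [d [Hd K]]; [lra|].
  exists d. split; [lra|]. intros a' b' Ha Hb.
  exists (RInt beta_kernel a' b'). split; [apply beta_kernel_is_RInt; lra|].
  rewrite (RInt_beta_kernel_Chasles a' (1/2) b'), RInt_beta_right_half by lra.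
  pose proof (K a' ltac:(lra)) as Ka. pose proof (K (1 - b') ltac:(lra)) as Kb.
  fold (beta_tail a'). apply Rabs_def2 in Ka. apply Rabs_def2 in Kb. apply Rabs_def1; lra.
Qed.

End Beta.

Lemma pow_unit_interval x n : 0 <= x <= 1 -> 0 <= x ^ n <= 1.
Proof. intros Hx. induction n as [|n IH]; simpl; nra. Qed.

Lemma one_sub_pow_le x n : 0 <= x <= 1 -> 1 - x ^ n <= INR n * (1 - x).
Proof.
  intros Hx. induction n as [|n IH]; [simpl; lra|].
  rewrite S_INR. simpl. pose proof (pow_unit_interval x n Hx). nra.
Qed.

Lemma beta_kernel_root (q i : nat) x w : (0 < q)%nat -> (i <= q)%nat -> 0 < x < 1 -> 0 < w ->
  x * (1 - x) = w ^ q -> beta_kernel (INR i / INR q) x = / w ^ (q - i).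
Proof.
  intros Hq Hi Hx Hw Hxw.
  assert (Q : 0 < INR q) by (apply lt_0_INR; lia).
  unfold beta_kernel. rewrite Rpower_mult_distr by lra.
  rewrite Hxw, <- (Rpower_pow q w Hw), Rpower_mult.
  replace (INR q * (INR i / INR q - 1)) with (- INR (q - i)) by (rewrite minus_INR by lia; field; lra).
  rewrite Rpower_Ropp, Rpower_pow by exact Hw. reflexivity.
Qed.

(** * The substitution [x = phi t]

    On [0 < t < 1/2] the x-coordinate of every path [gamma_k] is
    [phi t = (1 - sqrt (1 - (2t)^q)) / 2], an increasing bijection of [(0, 1/2)]
    with [phi t (1 - phi t) = (2t)^q / 4] and derivative [dphi t].  Substituting
    [x = phi t] in the Beta integral over [(0, 1/2)] gives the improper integral
    of [beta_kernel u (phi t) * dphi t]. *)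
Section Substitution.
Variable q : nat.
Hypothesis Hq : (2 <= q)%nat.

Definition phi (t : R) : R := (1 - sqrt (1 - (2 * t) ^ q)) / 2.
Definition dphi (t : R) : R := INR q * (2 * t) ^ (pred q) / (2 * sqrt (1 - (2 * t) ^ q)).

Lemma pow_2t_bounds t : 0 < t < 1/2 -> 0 < (2 * t) ^ q < 1 /\ (2 * t) ^ q <= 2 * t.
Proof.
  intros Ht. split; [split|].
  - apply pow_lt; lra.
  - apply pow_lt_1_compat; [lra | lia].
  - destruct q as [|n]; [lia|]. simpl. pose proof (pow_unit_interval (2 * t) n ltac:(lra)). nra.
Qed.

Lemma sqrt_bounds t : 0 < t < 1/2 -> 0 < sqrt (1 - (2 * t) ^ q) < 1 /\
  sqrt (1 - (2 * t) ^ q) * sqrt (1 - (2 * t) ^ q) = 1 - (2 * t) ^ q.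
Proof.
  intros Ht. destruct (pow_2t_bounds t Ht) as [[A B] C].
  assert (E : sqrt (1 - (2 * t) ^ q) * sqrt (1 - (2 * t) ^ q) = 1 - (2 * t) ^ q)
    by (apply sqrt_sqrt; lra).
  pose proof (sqrt_pos (1 - (2 * t) ^ q)).
  split; [split; [apply sqrt_lt_R0; lra | nra] | exact E].
Qed.

Lemma phi_bounds t : 0 < t < 1/2 -> 0 < phi t <= t /\ phi t < 1/2.
Proof.
  intros Ht. destruct (pow_2t_bounds t Ht) as [[A B] C].
  destruct (sqrt_bounds t Ht) as [[D E] F]. unfold phi. split; [split|]; nra.
Qed.

Lemma phi_product t : 0 < t < 1/2 -> phi t * (1 - phi t) = (2 * t) ^ q / 4.
Proof. intros Ht. destruct (sqrt_bounds t Ht) as [_ F]. unfold phi. nra. Qed.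

(** [phi t -> 1/2] as [t -> 1/2-], with the explicit modulus [2 d^2 / q]. *)
Lemma phi_near_half d : 0 < d -> exists del, 0 < del <= 1/4 /\
  forall t, 1/2 - del < t < 1/2 -> 1/2 - d < phi t.
Proof.
  intros Hd. assert (Q : 0 < INR q) by (apply lt_0_INR; lia).
  exists (Rmin (1/4) (2 * d * d / INR q)).
  assert (M : Rmin (1/4) (2 * d * d / INR q) <= 2 * d * d / INR q) by apply Rmin_r.
  split; [split; [apply Rmin_glb_lt; [lra | apply Rdiv_lt_0_compat; nra] | apply Rmin_l]|].
  intros t Ht. assert (Rmin (1/4) (2 * d * d / INR q) <= 1/4) by apply Rmin_l.
  destruct (sqrt_bounds t ltac:(lra)) as [[D E] F].
  pose proof (one_sub_pow_le (2 * t) q ltac:(lra)).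
  assert (INR q * (1 - 2 * t) < 4 * d * d).
  { apply Rlt_le_trans with (INR q * (2 * (2 * d * d / INR q))).
    - apply Rmult_lt_compat_l; lra.
    - right; field; lra. }
  unfold phi. nra.
Qed.

Lemma phi_derive t : 0 < t < 1/2 -> is_derive phi t (dphi t).
Proof.
  intros Ht. destruct (sqrt_bounds t Ht) as [[D E] F]. destruct (pow_2t_bounds t Ht) as [[A B] C].
  unfold phi, dphi. auto_derive.
  - lra.
  - unfold Rminus. field. unfold Rminus in D. lra.
Qed.

Lemma dphi_continuous t : 0 < t < 1/2 -> continuous dphi t.
Proof.
  intros Ht. destruct (sqrt_bounds t Ht) as [[D E] F]. destruct (pow_2t_bounds t Ht) as [[A B] C].
  apply (ex_derive_continuous (K := R_AbsRing) (V := R_NormedModule)).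
  unfold dphi. auto_derive. unfold Rminus in D. repeat split; lra.
Qed.

(** On the second half the x-coordinate is [1 - phi (1 - t)]. *)
Lemma phi_reflected_derive t : 1/2 < t < 1 ->
  is_derive (fun s => 1 - phi (1 - s)) t (dphi (1 - t)).
Proof.
  intros Ht.
  assert (D : is_derive (fun s => phi (1 - s)) t (scal (-1) (dphi (1 - t)))).
  { apply (is_derive_comp phi (fun s => 1 - s)).
    - apply phi_derive; lra.
    - auto_derive; [exact I | ring]. }
  pose proof (is_derive_minus (K := R_AbsRing) (V := R_NormedModule) _ _ t _ _
                (is_derive_const 1 t) D) as E.
  replace (dphi (1 - t)) with (minus zero (scal (-1) (dphi (1 - t)))); [exact E|].
  change (0 - -1 * dphi (1 - t) = dphi (1 - t)). ring.
Qed.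


Variable u : R.
Hypothesis Hu : 0 < u < 1.

Definition beta_substituted (t : R) : R := beta_kernel u (phi t) * dphi t.

Lemma is_RInt_beta_substituted a b : 0 < a < 1/2 -> 0 < b < 1/2 ->
  is_RInt beta_substituted a b (RInt (beta_kernel u) (phi a) (phi b)).
Proof.
  intros Ha Hb.
  assert (Hin : forall x, Rmin a b <= x <= Rmax a b -> 0 < x < 1/2).
  { intros x Hx. split.
    - eapply Rlt_le_trans; [|apply Hx]. apply Rmin_glb_lt; lra.
    - eapply Rle_lt_trans; [apply Hx|]. apply Rmax_lub_lt; lra. }
  apply (is_RInt_ext (fun x => scal (dphi x) (beta_kernel u (phi x)))).
  - intros x _. unfold beta_substituted.
    change (dphi x * beta_kernel u (phi x) = beta_kernel u (phi x) * dphi x). ring.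
  - apply (is_RInt_comp (V := R_CompleteNormedModule)); intros x Hx; specialize (Hin x Hx).
    + apply beta_kernel_continuous. pose proof (phi_bounds x Hin). lra.
    + split; [apply phi_derive | apply dphi_continuous]; exact Hin.
Qed.

Lemma ImproperInt_beta_substituted : ImproperInt beta_substituted 0 (1/2) (half_beta u Hu).
Proof.
  intros eps He. destruct (ImproperInt_beta_half u Hu eps He) as [dx [Hdx K]].
  destruct (phi_near_half dx Hdx) as [d2 [Hd2 K2]].
  exists (Rmin (Rmin dx d2) (1/4)). split; [repeat apply Rmin_glb_lt; lra|].
  intros a' b' Ha Hb.
  assert (Rmin (Rmin dx d2) (1/4) <= dx /\ Rmin (Rmin dx d2) (1/4) <= d2 /\
          Rmin (Rmin dx d2) (1/4) <= 1/4) as [M1 [M2 M3]].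
  { repeat split; [eapply Rle_trans; [apply Rmin_l | apply Rmin_l]
                  | eapply Rle_trans; [apply Rmin_l | apply Rmin_r] | apply Rmin_r]. }
  (* the substituted interval (phi a', phi b') is as close to (0, 1/2) as needed *)
  pose proof (phi_bounds a' ltac:(lra)). pose proof (phi_bounds b' ltac:(lra)).
  pose proof (K2 b' ltac:(lra)).
  destruct (K (phi a') (phi b')) as [I [HI Hl]]; try lra.
  exists I. split; [|exact Hl].
  rewrite <- (is_RInt_unique _ _ _ _ HI). apply is_RInt_beta_substituted; lra.
Qed.

End Substitution.

(** * Integration along the paths [gamma_k] *)

(** Modulus of the y-coordinate of [gamma_k] at parameter [t <= 1/2]. *)
Definition y_modulus (q : nat) (t : R) : R := / Rpower 4 (/ INR q) * (2 * t).

Lemma y_modulus_pos q t : 0 < t -> 0 < y_modulus q t.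
Proof.
  intros Ht. unfold y_modulus.
  apply Rmult_lt_0_compat; [apply Rinv_0_lt_compat, Rpower_pos | lra].
Qed.

Lemma y_modulus_pow q t : (0 < q)%nat -> y_modulus q t ^ q = (2 * t) ^ q / 4.
Proof.
  intros Hq. assert (Q : 0 < INR q) by (apply lt_0_INR; lia).
  unfold y_modulus. rewrite Rpow_mult_distr, pow_inv.
  rewrite <- (Rpower_pow q (Rpower 4 (/ INR q))) by apply Rpower_pos.
  rewrite Rpower_mult, Rinv_l, Rpower_1 by lra. field.
Qed.

Lemma gamma_first_half q k t : t <= 1/2 ->
  fst (gamma_xy q k t) = RC (phi q t) /\
  snd (gamma_xy q k t) = Cmul (RC (y_modulus q t)) (Cpow (zeta q) k).
Proof.
  intros Ht. unfold gamma_xy, gamma_zw, zw_to_xy, phi, y_modulus.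
  destruct (Rle_dec t (1/2)) as [_ | Hn]; [|lra].
  pose proof (Rpower_pos 4 (/ INR q)).
  split; apply Cx_eq; simpl; field; lra.
Qed.

Lemma gamma_second_half q k t : 1/2 < t ->
  fst (gamma_xy q k t) = RC (1 - phi q (1 - t)) /\
  snd (gamma_xy q k t) = Cmul (RC (y_modulus q (1 - t))) (Cpow (zeta q) k).
Proof.
  intros Ht. unfold gamma_xy, gamma_zw, zw_to_xy, phi, y_modulus.
  destruct (Rle_dec t (1/2)) as [Hn | _]; [lra|].
  replace (2 * (1 - t)) with (2 - 2 * t) by ring.
  pose proof (Rpower_pos 4 (/ INR q)).
  split; apply Cx_eq; simpl; field; lra.
Qed.

Lemma derivable_pt_lim_on_interval (f g : R -> R) a b t l : a < t < b ->
  (forall s, a < s < b -> f s = g s) -> is_derive g t l -> derivable_pt_lim f t l.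
Proof.
  intros Ht Hfg Hg. apply is_derive_Reals. apply (is_derive_ext_loc g); [|exact Hg].
  apply (filter_imp (fun s => a < s < b)).
  - intros s Hs. symmetry. apply Hfg; exact Hs.
  - apply (open_and _ _ (open_gt a) (open_lt b)). exact Ht.
Qed.

(** [(r zeta^k)^(-(q - i)) = r^(-(q - i)) zeta^(k i)], as [zeta^q = 1]. *)
Lemma Cinv_pow_zeta q i k r : (0 < q)%nat -> (i <= q)%nat -> r <> 0 ->
  Cinv (Cpow (Cmul (RC r) (Cpow (zeta q) k)) (q - i)) =
  Cmul (RC (/ r ^ (q - i))) (Cpow (zeta q) (k * i)).
Proof.
  intros Hq Hi Hr. apply Cinv_unique.
  rewrite Cpow_Cmul, Cpow_RC, <- Cpow_mul.
  transitivity (Cmul (RC (r ^ (q - i) * / r ^ (q - i)))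
                     (Cmul (Cpow (zeta q) (k * (q - i))) (Cpow (zeta q) (k * i)))).
  - rewrite RC_mul. ring.
  - rewrite zeta_pow_cancel, Rinv_r by (auto; apply pow_nonzero; exact Hr).
    apply Cx_eq; simpl; ring.
Qed.

Lemma ImpIntC_scaled (h : R -> Cx) a b c (g : R -> R) l : a < b ->
  (forall t, a < t < b -> h t = Cmul c (RC (g t))) -> ImproperInt g a b l ->
  ImpIntC h a b (Cmul c (RC l)).
Proof.
  intros Hab Hh Hg. split; apply ImpInt_iff.
  - replace (Cre (Cmul c (RC l))) with (Cre c * l) by (simpl; ring).
    apply (ImproperInt_ext (fun t => Cre c * g t)); [exact Hab | | apply ImproperInt_scal; exact Hg].
    intros t Ht. rewrite Hh by exact Ht. simpl; ring.
  - replace (Cim (Cmul c (RC l))) with (Cim c * l) by (simpl; ring).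
    apply (ImproperInt_ext (fun t => Cim c * g t)); [exact Hab | | apply ImproperInt_scal; exact Hg].
    intros t Ht. rewrite Hh by exact Ht. simpl; ring.
Qed.

(** Along a piece of [gamma_k] on which [x = X t] is real and [y = r t zeta^k],
    the form [omega_i] pulls back to [zeta^(k i) / beta] times the real density
    [X' / r^(q - i)]. *)
Lemma PieceInt_omega q i k beta a b (X dX r dens : R -> R) l :
  (0 < q)%nat -> (i <= q)%nat -> a < b ->
  (forall t, a < t < b ->
     fst (gamma_xy q k t) = RC (X t) /\ is_derive X t (dX t) /\
     snd (gamma_xy q k t) = Cmul (RC (r t)) (Cpow (zeta q) k) /\ r t <> 0 /\
     dX t / r t ^ (q - i) = dens t) ->
  ImproperInt dens a b l ->
  PieceInt (omega_coef q i beta) (gamma_xy q k) a b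
    (Cmul (Cpow (zeta q) (k * i)) (RC (/ beta * l))).
Proof.
  intros Hq Hi Hab Hpiece Hdens. exists (fun t => RC (dX t)). split.
  - intros t Ht. split.
    + apply (derivable_pt_lim_on_interval _ X a b); [exact Ht | | apply Hpiece, Ht].
      intros s Hs. destruct (Hpiece s Hs) as [-> _]. reflexivity.
    + apply (derivable_pt_lim_on_interval _ (fun _ => 0) a b); [exact Ht | |].
      * intros s Hs. destruct (Hpiece s Hs) as [-> _]. reflexivity.
      * apply (is_derive_const (K := R_AbsRing) (V := R_NormedModule)).
  - apply (ImpIntC_scaled _ a b _ (fun t => / beta * dens t)); [exact Hab | |].
    + intros t Ht. destruct (Hpiece t Ht) as [_ [_ [-> [Hr <-]]]].
      unfold omega_coef. rewrite Cinv_pow_zeta by assumption.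
      apply Cx_eq; simpl; unfold Rdiv; ring.
    + apply ImproperInt_scal; exact Hdens.
Qed.

(** On the first half of [gamma_k], [omega_i]'s real density is the substituted
    Beta integrand, because [phi t (1 - phi t) = y_modulus t ^ q]. *)
Lemma beta_kernel_phi (q i : nat) t : (2 <= q)%nat -> (i <= q)%nat -> 0 < t < 1/2 ->
  beta_kernel (INR i / INR q) (phi q t) = / y_modulus q t ^ (q - i).
Proof.
  intros Hq Hi Ht. pose proof (phi_bounds q Hq t Ht).
  apply beta_kernel_root; try lia; try lra.
  - apply y_modulus_pos; lra.
  - rewrite phi_product, y_modulus_pow by (lia || lra). reflexivity.
Qed.

Section Paths.
Variables (q i k : nat).
Hypotheses (Hq : (2 <= q)%nat) (Hi : (i <= q)%nat) (Hu : 0 < INR i / INR q < 1).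

Lemma PieceInt_first_half beta :
  PieceInt (omega_coef q i beta) (gamma_xy q k) 0 (1/2)
    (Cmul (Cpow (zeta q) (k * i)) (RC (/ beta * half_beta (INR i / INR q) Hu))).
Proof.
  apply (PieceInt_omega q i k beta 0 (1/2) (phi q) (dphi q) (y_modulus q) (beta_substituted q (INR i / INR q)));
    [lia | exact Hi | lra | | apply ImproperInt_beta_substituted; exact Hq].
  intros t Ht. destruct (gamma_first_half q k t ltac:(lra)) as [Hx Hy].
  pose proof (y_modulus_pos q t ltac:(lra)).
  split; [exact Hx | split; [apply phi_derive; [exact Hq | lra] | split; [exact Hy | split; [lra |]]]].
  unfold beta_substituted. rewrite beta_kernel_phi by (auto; lra). unfold Rdiv; ring.
Qed.

Lemma PieceInt_second_half beta :
  PieceInt (omega_coef q i beta) (gamma_xy q k) (1/2) 1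
    (Cmul (Cpow (zeta q) (k * i)) (RC (/ beta * half_beta (INR i / INR q) Hu))).
Proof.
  apply (PieceInt_omega q i k beta (1/2) 1 (fun t => 1 - phi q (1 - t)) (fun t => dphi q (1 - t))
           (fun t => y_modulus q (1 - t)) (fun t => beta_substituted q (INR i / INR q) (1 - t)));
    [lia | exact Hi | lra | |].
  - intros t Ht. destruct (gamma_second_half q k t ltac:(lra)) as [Hx Hy].
    pose proof (y_modulus_pos q (1 - t) ltac:(lra)).
    split; [exact Hx | split; [apply phi_reflected_derive; [exact Hq | lra] | split; [exact Hy | split; [lra |]]]].
    unfold beta_substituted. rewrite beta_kernel_phi by (auto; lra). unfold Rdiv; ring.
  - (* the second half is the first one traversed by [t |-> 1 - t] *)
    pose proof (ImproperInt_reflect _ _ _ _ (ImproperInt_beta_substituted q Hq _ Hu)) as Hrefl.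
    replace (1 - 1/2) with (1/2) in Hrefl by field. replace (1 - 0) with 1 in Hrefl by ring.
    exact Hrefl.
Qed.

Lemma GammaInt_omega :
  GammaInt q (omega_coef q i (2 * half_beta (INR i / INR q) Hu)) k (Cpow (zeta q) (k * i)).
Proof.
  exists (Cmul (Cpow (zeta q) (k * i)) (RC (/ (2 * half_beta (INR i / INR q) Hu) * half_beta (INR i / INR q) Hu))),
         (Cmul (Cpow (zeta q) (k * i)) (RC (/ (2 * half_beta (INR i / INR q) Hu) * half_beta (INR i / INR q) Hu))).
  split; [apply PieceInt_first_half | split; [apply PieceInt_second_half|]].
  pose proof (half_beta_pos _ Hu). apply Cx_eq; simpl; field; lra.
Qed.

End Paths.

Lemma ImpIntC_unique (h1 h2 : R -> Cx) a b L1 L2 : a < b ->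
  (forall t, a < t < b -> h1 t = h2 t) -> ImpIntC h1 a b L1 -> ImpIntC h2 a b L2 -> L1 = L2.
Proof.
  intros Hab Hh [H1re H1im] [H2re H2im].
  apply ImpInt_iff in H1re, H1im, H2re, H2im.
  apply Cx_eq; eapply ImproperInt_unique; try eassumption;
    eapply ImproperInt_ext; try eassumption; intros t Ht; rewrite Hh by exact Ht; reflexivity.
Qed.

(** The derivative [dx] in [PieceInt] is determined on [(a, b)], hence so is the value. *)
Lemma PieceInt_unique f p a b L1 L2 : a < b ->
  PieceInt f p a b L1 -> PieceInt f p a b L2 -> L1 = L2.
Proof.
  intros Hab [d1 [D1 I1]] [d2 [D2 I2]].
  refine (ImpIntC_unique _ _ a b _ _ Hab _ I1 I2).
  intros t Ht. f_equal.
  destruct (D1 t Ht) as [A1 B1], (D2 t Ht) as [A2 B2].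
  apply Cx_eq; eapply uniqueness_limite; eassumption.
Qed.

Lemma GammaInt_unique q f k L1 L2 : GammaInt q f k L1 -> GammaInt q f k L2 -> L1 = L2.
Proof.
  intros [a1 [b1 [A1 [B1 ->]]]] [a2 [b2 [A2 [B2 ->]]]].
  rewrite (PieceInt_unique _ _ 0 (1/2) a1 a2 ltac:(lra) A1 A2),
          (PieceInt_unique _ _ (1/2) 1 b1 b2 ltac:(lra) B1 B2).
  reflexivity.
Qed.

(** * The period matrices *)

Lemma Csum_ext n f g : (forall m, (m < n)%nat -> f m = g m) -> Csum n f = Csum n g.
Proof.
  induction n as [|n IH]; intros H; simpl; [reflexivity|].
  rewrite IH by (intros m Hm; apply H; lia). rewrite H by lia. reflexivity.
Qed.

Lemma alternating_sum_pow z j :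
  Csum (2 * j) (fun m => if Nat.odd m then Cpow z m else Copp (Cpow z m)) =
  Cmul (Cadd (Copp C1) z) (Csum j (fun k => Cpow z (2 * k))).
Proof.
  induction j as [|j IH]; [apply Cx_eq; simpl; ring|].
  replace (2 * S j)%nat with (S (S (2 * j))) by lia. cbn [Csum]. rewrite IH.
  replace (Nat.odd (2 * j)) with false by (symmetry; apply Nat.odd_mul).
  replace (Nat.odd (S (2 * j))) with true by (rewrite Nat.odd_succ, Nat.even_mul; reflexivity).
  change (Cpow z (S (2 * j))) with (Cmul z (Cpow z (2 * j))). ring.
Qed.

Lemma periods_of_powers q g i I j : (1 <= j <= g)%nat ->
  (forall m, (m <= 2 * g)%nat -> I m = Cpow (zeta q) (m * i)) ->
  periodA I j = OmegaA_val q i j /\ periodB I j = OmegaB_val q i j.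
Proof.
  intros Hj HI. set (z := Cpow (zeta q) i).
  assert (Hz : forall m, (m <= 2 * g)%nat -> I m = Cpow z m)
    by (intros m Hm; rewrite HI, Nat.mul_comm, Cpow_mul by exact Hm; reflexivity).
  assert (Hz2 : forall k, Cpow (zeta q) (2 * i * k) = Cpow z (2 * k))
    by (intros k; unfold z; rewrite <- Cpow_mul; f_equal; lia).
  split.
  - unfold periodA, OmegaA_val. rewrite !Hz, Hz2 by lia. fold z.
    replace (2 * j)%nat with (S (S (2 * (j - 1)))) by lia.
    replace (S (S (2 * (j - 1))) - 1)%nat with (S (2 * (j - 1))) by lia.
    simpl Cpow. unfold Csub. ring.
  - unfold periodB, OmegaB_val. fold z.
    rewrite (Csum_ext _ _ (fun m => if Nat.odd m then Cpow z m else Copp (Cpow z m)))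
      by (intros m Hm; rewrite Hz by lia; reflexivity).
    rewrite alternating_sum_pow. f_equal. apply Csum_ext. intros k _. symmetry; apply Hz2.
Qed.

Lemma ratio_in_unit_interval i q : (1 <= i < q)%nat -> 0 < INR i / INR q < 1.
Proof.
  intros Hi. assert (0 < INR i) by (apply lt_0_INR; lia).
  assert (INR i < INR q) by (apply lt_INR; lia).
  split; [apply Rdiv_lt_0_compat; lra|].
  apply (Rmult_lt_reg_r (INR q)); [lra|]. field_simplify; lra.
Qed.

Theorem mainTheorem8 (g : nat) (Hg : (2 <= g)%nat) :
  let q := (2 * g + 1)%nat in
  forall i : nat, (1 <= i <= g)%nat ->
  (exists beta, BetaInt (INR i / INR q) (INR i / INR q) beta) /\
  (forall beta, BetaInt (INR i / INR q) (INR i / INR q) beta ->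
     (forall m, (m <= 2 * g)%nat ->
        exists L, GammaInt q (omega_coef q i beta) m L) /\
     (forall I : nat -> Cx,
        (forall m, (m <= 2 * g)%nat -> GammaInt q (omega_coef q i beta) m (I m)) ->
        forall j, (1 <= j <= g)%nat ->
          periodA I j = OmegaA_val q i j /\ periodB I j = OmegaB_val q i j)).
Proof.
  intros q i Hi.
  assert (Hq : (2 <= q)%nat) by (unfold q; lia).
  assert (Hu : 0 < INR i / INR q < 1) by (apply ratio_in_unit_interval; unfold q; lia).
  split.
  - exists (2 * half_beta _ Hu). apply ImpInt_iff, ImproperInt_beta.
  - intros beta Hbeta.
    (* the normalising constant is the Beta value B(i/q, i/q) = 2 half_beta *)
    assert (Hb : beta = 2 * half_beta _ Hu).
    { apply ImpInt_iff in Hbeta.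
      exact (ImproperInt_unique _ 0 1 _ _ ltac:(lra) Hbeta (ImproperInt_beta _ Hu)). }
    subst beta.
    assert (Hgamma : forall m,
              GammaInt q (omega_coef q i (2 * half_beta _ Hu)) m (Cpow (zeta q) (m * i)))
      by (intros m; apply GammaInt_omega; [exact Hq | lia]).
    split.
    + intros m _. eexists. apply Hgamma.
    + intros I HI j Hj. apply (periods_of_powers q g i I j Hj).
      intros m Hm. exact (GammaInt_unique _ _ _ _ _ (HI m Hm) (Hgamma m)).
Qed.
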